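(* Let $G$ be a connected graph with $|V(G)| \ge 3$ and $\det(G) = 1$. Then $\det'(G) = 2$ if $G$ is edge-flip-invariant, and $\det'(G) = 1$ otherwise.
   Context: $G$ is edge-flip-invariant if for every edge $\{u,v\}\in E(G)$ there is an automorphism $\phi$ of $G$ with $\phi(u)=v$ and $\phi(v)=u$. A vertex subset $S$ of $G$ is a vertex determining set if the only automorphism of $G$ fixing every vertex of $S$ is the identity; the determining number $\det(G)$ is the minimum size of a vertex determining set. For a graph $G$ with at most one isolated vertex and no component isomorphic to $K_2$, an edge subset $T$ is an edge determining set if the only automorphism $\phi$ of $G$ satisfying $\{\phi(u),\phi(v)\}=\{u,v\}$ for all $\{u,v\}\in T$ is the identity; the determining index $\det'(G)$ is the minimum size of an edge determining set. *)

(* A finite simple graph is a symmetric irreflexive relation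
   e : rel T on a finType T (vertices = T). *)
From mathcomp Require Import all_boot all_fingroup.
Set Implicit Arguments. Unset Strict Implicit. Unset Printing Implicit Defensive.

Section Defs.
Variable T : finType.
Variable e : rel T.

Definition is_aut (phi : {perm T}) : Prop :=
  forall x y, e (phi x) (phi y) = e x y.

Definition connected_graph : Prop := forall x y : T, connect e x y.

Definition edges : {set {set T}} :=
  [set [set p.1; p.2] | p in [pred p : T * T | e p.1 p.2]].

Definition edge_flip_invariant : Prop :=
  forall u v, e u v -> exists phi : {perm T}, is_aut phi /\ phi u = v /\ phi v = u.

Definition vertex_determining (S : {set T}) : Prop :=
  forall phi : {perm T}, is_aut phi -> (forall x, x \in S -> phi x = x) -> phi = 1%g.

Definition determining_number_is (k : nat) : Prop :=
  (exists S : {set T}, vertex_determining S /\ #|S| = k) /\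
  (forall S : {set T}, vertex_determining S -> k <= #|S|).

Definition edge_determining (S : {set {set T}}) : Prop :=
  S \subset edges /\
  forall phi : {perm T}, is_aut phi ->
    (forall A, A \in S -> phi @: A = A) -> phi = 1%g.

Definition determining_index_is (k : nat) : Prop :=
  (exists S : {set {set T}}, edge_determining S /\ #|S| = k) /\
  (forall S : {set {set T}}, edge_determining S -> k <= #|S|).

End Defs.

(* Let v be a vertex whose stabiliser in Aut(G) is trivial, and w a neighbour
   of v. An automorphism mapping the edge {v,w} onto itself either fixes v,
   and is then the identity, or swaps v and w. Hence {vw} alone is
   determining unless vw can be flipped, and adding an edge xu with x in {v,w}
   and u outside rules out the swap, so det'(G) <= 2. If G is
   edge-flip-invariant, no single edge is determining, so det'(G) = 2.
   Otherwise some edge at v cannot be flipped: if all of them could, then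
   conjugating these flips along paths from v shows that Aut(G) is
   vertex-transitive and, by conjugating once more, that every edge can be
   flipped. Finally det'(G) >= 1 because Aut(G) is nontrivial. *)
From mathcomp Require Import all_boot all_fingroup.
From Stdlib Require Import Classical.
Set Implicit Arguments. Unset Strict Implicit. Unset Printing Implicit Defensive.

Section Connect.
Variable T : finType.
Variable e : rel T.

Lemma connect_propagate (P : T -> Prop) :
  (forall x y, e x y -> P x -> P y) -> forall x y, connect e x y -> P x -> P y.
Proof.
move=> stepP x _ /connectP[p e_p ->].
by elim: p x e_p => //= y p IHp x /andP[exy e_p] Px; apply: IHp (stepP _ _ exy Px).
Qed.

Lemma connect_edge_out (A : {set T}) a z :
  connect e a z -> a \in A -> z \notin A ->
  exists x y, [/\ x \in A, y \notin A & e x y].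
Proof.
move=> conn_az Aa Az.
have [/exists_inP[x Ax /exists_inP[y]]|/exists_inPn out_A] :=
  boolP [exists x in A, exists y in ~: A, e x y].
  by rewrite inE => Ay exy; exists x, y.
have closedA x y : e x y -> x \in A -> y \in A.
  move=> exy Ax; apply: contraT => Ay.
  by move/exists_inPn/(_ y): (out_A x Ax); rewrite inE exy => /(_ Ay).
by rewrite (connect_propagate closedA conn_az Aa) in Az.
Qed.

End Connect.

Lemma connected_edge_out (T : finType) (e : rel T) (A : {set T}) a :
  connected_graph e -> a \in A -> #|A| < #|T| ->
  exists x y, [/\ x \in A, y \notin A & e x y].
Proof.
move=> Gconn Aa; rewrite -(cardsC A) -{1}[#|A|]addn0 ltn_add2l card_gt0.
by case/set0Pn=> z; rewrite inE; apply: connect_edge_out (Gconn a z) Aa.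
Qed.

Lemma perm_stable_set2 (T : finType) (p : {perm T}) a b :
  p @: [set a; b] = [set a; b] ->
  (p a = a /\ p b = b) \/ (p a = b /\ p b = a).
Proof.
move=> stab.
have /set2P pa : p a \in [set a; b] by rewrite -stab imset_f ?set21.
have /set2P pb : p b \in [set a; b] by rewrite -stab imset_f ?set22.
case: pa pb => pa [] pb; [|by left|by right|].
- by left; split=> //; rewrite pb; apply: (perm_inj (s := p)); rewrite pa pb.
- by right; split=> //; rewrite pb; apply: (perm_inj (s := p)); rewrite pa pb.
Qed.

Section Automorphisms.
Variable T : finType.
Variable e : rel T.

Definition flippable (u w : T) : Prop :=
  exists phi : {perm T}, is_aut e phi /\ phi u = w /\ phi w = u.

Lemma aut1 : is_aut e 1%g.
Proof. by move=> x y; rewrite !perm1. Qed.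

Lemma autM (p q : {perm T}) : is_aut e p -> is_aut e q -> is_aut e (p * q)%g.
Proof. by move=> ap aq x y; rewrite !permM aq ap. Qed.

Lemma autV (p : {perm T}) : is_aut e p -> is_aut e p^-1%g.
Proof. by move=> ap x y; rewrite -ap !permKV. Qed.

Lemma edge_set2 a b : e a b -> [set a; b] \in edges e.
Proof. by move=> eab; apply/imsetP; exists (a, b). Qed.

Section FlipsAtVertex.
Variable v : T.
Hypothesis flips_at_v : forall w, e v w -> flippable v w.

(* An automorphism phi with phi v = x turns a flip of {v, phi^-1 y} into a
   move of v to y, or, conjugated by phi, into a flip of {x, y}. *)
Lemma flip_conjugate (phi : {perm T}) x y :
  is_aut e phi -> phi v = x -> e x y ->
  exists2 psi : {perm T}, is_aut e psi &
    [/\ psi v = (phi^-1 y)%g, psi (phi^-1 y)%g = v & flippable x y].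
Proof.
move=> aut_phi phi_v exy.
have /flips_at_v[psi [aut_psi [psi_v psi_y]]] : e v (phi^-1 y)%g.
  by rewrite -aut_phi permKV phi_v.
exists psi => //; split=> //; exists (phi^-1 * psi * phi)%g; split.
  by apply: autM => //; apply: autM => //; apply: autV.
by rewrite !permM -phi_v permK psi_v permKV psi_y.
Qed.

Lemma aut_transitive_from x :
  connect e v x -> exists2 phi : {perm T}, is_aut e phi & phi v = x.
Proof.
pose P x := exists2 phi : {perm T}, is_aut e phi & phi v = x.
move=> conn_vx; apply: (connect_propagate (P := P) _ conn_vx); last first.
  by exists 1%g; [exact: aut1 | rewrite perm1].
move=> y z eyz [phi aut_phi phi_v].
have [psi aut_psi [psi_v _ _]] := flip_conjugate aut_phi phi_v eyz.
by exists (psi * phi)%g; [apply: autM | rewrite permM psi_v permKV].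
Qed.

Lemma flips_at_edge_flip_invariant :
  connected_graph e -> edge_flip_invariant e.
Proof.
move=> Gconn x y exy.
have [phi aut_phi phi_v] := aut_transitive_from (Gconn v x).
by have [_ _ [_ _]] := flip_conjugate aut_phi phi_v exy.
Qed.

End FlipsAtVertex.

Lemma edge_determining_gt0 (S : {set {set T}}) :
  ~ vertex_determining e set0 -> edge_determining e S -> 0 < #|S|.
Proof.
move=> nontrivial [_ detS]; rewrite card_gt0; apply/negP => /eqP S0.
by apply: nontrivial => phi aut_phi _; apply: detS => // A; rewrite S0 inE.
Qed.

Hypothesis e_irr : irreflexive e.

Lemma flippable_edge_not_determining a b :
  e a b -> flippable a b -> ~ edge_determining e [set [set a; b]].
Proof.
move=> eab [phi [aut_phi [phi_a phi_b]]] [_ detS].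
have phi1 : phi = 1%g.
  by apply: detS => // A /set1P ->; rewrite imsetU1 imset_set1 phi_a phi_b setUC.
by move: eab; rewrite -{1}phi_a phi1 perm1 e_irr.
Qed.

Lemma edge_flip_invariant_determining_gt1 (S : {set {set T}}) :
  ~ vertex_determining e set0 -> edge_flip_invariant e ->
  edge_determining e S -> 1 < #|S|.
Proof.
move=> nontrivial flip_inv detS.
rewrite ltn_neqAle (edge_determining_gt0 nontrivial detS) andbT eq_sym.
apply/negP=> /cards1P[A defS]; have [sub_edges _] := detS.
have /imsetP[[a b] /= eab defA] : A \in edges e.
  by rewrite (subsetP sub_edges) ?defS ?set11.
by apply: (flippable_edge_not_determining eab (flip_inv a b eab)); rewrite -defA -defS.
Qed.

Variable v : T.
Hypothesis detv : vertex_determining e [set v].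

Lemma fixes_determining_vertex (phi : {perm T}) :
  is_aut e phi -> phi v = v -> phi = 1%g.
Proof. by move=> aut_phi phi_v; apply: detv => // x /set1P ->. Qed.

Lemma unflippable_edge_determining w :
  e v w -> ~ flippable v w -> edge_determining e [set [set v; w]].
Proof.
move=> evw unflip; split.
  by apply/subsetP=> A /set1P ->; apply: edge_set2.
move=> phi aut_phi stab; apply: fixes_determining_vertex => //.
have [[]//|[phi_v phi_w]] := perm_stable_set2 (stab _ (set11 _)).
by case: unflip; exists phi.
Qed.

Lemma two_edges_determining w x u :
  e v w -> e x u -> x \in [set v; w] -> u \notin [set v; w] ->
  edge_determining e [set [set v; w]; [set x; u]].
Proof.
move=> evw exu vw_x vw_u; split.
  by apply/subsetP=> A /set2P[] ->; apply: edge_set2.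
move=> phi aut_phi stab; apply: fixes_determining_vertex => //.
have [[]//|[phi_v phi_w]] := perm_stable_set2 (stab _ (set21 _ _)).
have phi_x_vw : phi x \in [set v; w] by rewrite -(stab _ (set21 _ _)) imset_f.
have [[phi_x _]|[phi_x _]] := perm_stable_set2 (stab _ (set22 _ _)); last first.
  by rewrite -phi_x phi_x_vw in vw_u.
case/set2P: vw_x phi_x => -> //; rewrite phi_w => same_vw.
by move: evw; rewrite same_vw e_irr.
Qed.

End Automorphisms.

Theorem corollary2 (T : finType) (e : rel T)
    (e_sym : symmetric e) (e_irr : irreflexive e)
    (Gconn : connected_graph e) (Gsize : 3 <= #|T|)
    (Gdet : determining_number_is e 1) :
  (edge_flip_invariant e -> determining_index_is e 2) /\
  (~ edge_flip_invariant e -> determining_index_is e 1).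
Proof.
have [[S [detS /eqP/cards1P[v defS]]] min_det] := Gdet.
rewrite {S}defS in detS.
have nontrivial : ~ vertex_determining e set0 by move=> /min_det; rewrite cards0.
split=> [flip_inv | not_flip_inv].
- have [_ [w [/set1P -> _ evw]]] :
      exists x w, [/\ x \in [set v], w \notin [set v] & e x w].
    by apply: connected_edge_out (set11 v) _; rewrite // cards1 (leq_trans _ Gsize).
  have [x [u [vw_x vw_u exu]]] :
      exists x u, [/\ x \in [set v; w], u \notin [set v; w] & e x u].
    apply: connected_edge_out (set21 v w) _ => //.
    by rewrite cards2 (leq_trans _ Gsize) //; case: eqP.
  split=> [|S']; last exact: edge_flip_invariant_determining_gt1.
  exists [set [set v; w]; [set x; u]]; split; first exact: two_edges_determining.
  by rewrite cards2; case: eqP => // same_edge; rewrite same_edge set22 in vw_u.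
- have [w [evw unflip]] : exists w, e v w /\ ~ flippable e v w.
    apply: NNPP => none.
    apply/not_flip_inv/(flips_at_edge_flip_invariant (v := v)) => // w evw.
    by apply: NNPP => unflip; apply: none; exists w.
  split=> [|S']; last exact: edge_determining_gt0.
  exists [set [set v; w]]; rewrite cards1; split=> //.
  exact: unflippable_edge_determining.
Qed.
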